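(* For all sufficiently large $n$, for every $k\ge t$ with $d_{\max}+1<n-k\le n/e^2$, we have $a_{k_1,\dots,k_x}<n^{-(2+x)}$ for every tuple $(k_1,\dots,k_x)$ of integers with $t_i\le k_i\le a_i$ and $\sum_i k_i=k$, and $\alpha_k\le\frac{1}{n^2}$.
   Context: Random graph model: $V$ is a set of $n$ vertices, $B\subseteq V$ a target set with $|B|=t$, each $v\in V$ has a prescribed out-degree $d_v$ with $2\le d_{\min}\le d_v\le d_{\max}$ (constants independent of $n$), and for each $v$ independently its out-neighbour set is chosen uniformly among all $d_v$-element subsets of $V$. Let $d_1,\dots,d_x$ be the distinct out-degrees, $a_i$ the number of vertices of out-degree $d_i$, $t_i$ the number of vertices of $B$ of out-degree $d_i$. For $S\supseteq B$ containing $k_i$ vertices of out-degree $d_i$, $R(k_1,\dots,k_x)$ is the probability that every vertex of $S$ has a directed path to $B$ lying inside $S$. For $k=\sum_i k_i$ with $t_i\le k_i\le a_i$, $a_{k_1,\dots,k_x}=\left(\prod_{i=1}^x\binom{a_i-t_i}{k_i-t_i}\left(\binom{n-k}{d_i}/\binom{n}{d_i}\right)^{a_i-k_i}\right)R(k_1,\dots,k_x)$, with the factor $(\binom{n-k}{d_i}/\binom{n}{d_i})^{a_i-k_i}$ equal to $1$ when $a_i=k_i$, and $\alpha_k=\sum_{\sum_i k_i=k,\ t_i\le k_i\le a_i}a_{k_1,\dots,k_x}$ (which is the probability that the set of vertices having a directed path to $B$ has exactly $k$ elements). *)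

From mathcomp Require Import all_boot all_order all_algebra.
From mathcomp Require Import reals.
From mathcomp.analysis Require Import sequences exp.
Set Implicit Arguments. Unset Strict Implicit. Unset Printing Implicit Defensive.
Import Order.TTheory GRing.Theory Num.Theory.
Local Open Scope ring_scope.

Section RandomGraph.
Variable R : realType.
Variable n : nat.
Variable d : 'I_n -> nat.
Variable B : {set 'I_n}.            (* target set, t = #|B| *)

Definition degs : seq nat := undup [seq d v | v <- enum 'I_n].
Definition ndeg : nat := size degs.
Definition deg_i (i : 'I_ndeg) : nat := nth 0%N degs i.
Definition acount (i : 'I_ndeg) : nat := #|[set v | d v == deg_i i]|.
Definition tcount (i : 'I_ndeg) : nat := #|[set v in B | d v == deg_i i]|.

(* outcome of the random graph: out-neighbour set of each vertex *)
Definition outcome := {ffun 'I_n -> {set 'I_n}}.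
Definition valid (N : outcome) : bool := [forall v, #|N v| == d v].

(* uniform product measure: each N v uniform among d v-subsets, independently *)
Definition prob (E : pred outcome) : R :=
  #|[set N | valid N & E N]|%:R / #|[set N : outcome | valid N]|%:R.

Definition reaches_inside (S : {set 'I_n}) (N : outcome) : bool :=
  [forall v in S, [exists b in B,
     connect (fun u w => [&& u \in S, w \in S & w \in N u]) v b]].

Definition has_counts (kk : 'I_ndeg -> nat) (S : {set 'I_n}) : bool :=
  (B \subset S) && [forall i, #|[set v in S | d v == deg_i i]| == kk i].

(* R(k_1,...,k_x): well defined since it only depends on the counts (by symmetry);
   we evaluate it at some set S with these counts. *)
Definition Rprob (kk : 'I_ndeg -> nat) : R :=
  match [pick S | has_counts kk S] with
  | Some S0 => prob (reaches_inside S0)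
  | None => 0
  end.

Definition a_coef (kk : 'I_ndeg -> nat) : R :=
  let k := (\sum_i kk i)%N in
  (\prod_i ('C(acount i - tcount i, kk i - tcount i)%:R
            * ('C(n - k, deg_i i)%:R / 'C(n, deg_i i)%:R) ^+ (acount i - kk i)))
  * Rprob kk.

Definition admissible (k : nat) (kk : 'I_ndeg -> nat) : bool :=
  [forall i, (tcount i <= kk i <= acount i)%N] && ((\sum_i kk i)%N == k).

(* alpha_k : sum over all admissible tuples (each k_i <= a_i <= n) *)
Definition alpha (k : nat) : R :=
  \sum_(kk : {ffun 'I_ndeg -> 'I_n.+1} | admissible k (fun i => nat_of_ord (kk i)))
     a_coef (fun i => nat_of_ord (kk i)).

End RandomGraph.

Arguments deg_i {n} d i.
Arguments acount {n} d i.
Arguments tcount {n} d B i.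
Arguments a_coef R {n} d B kk.
Arguments Rprob R {n} d B kk.
Arguments admissible {n} d B k kk.

(* With m = n - k, the bounds R <= 1 and C(m,d)/C(n,d) <= (m/n)^d <= (m/n)^2 (as d >= 2) give
   a_{k_1..k_x} <= prod_i C(a_i, a_i - k_i) (m/n)^(2(a_i - k_i)) <= C(n,m) (m/n)^(2m), the
   last step by superadditivity of binomials since sum_i (a_i - k_i) = m.  Because
   (1 + 1/m)^m <= e, this weight decreases in m as long as e^2 m <= n, so it is at most its
   value at m = d_max + 2, which is O(n^-(d_max+2)).  As there are at most d_max - 1 distinct
   degrees, this is below n^-(2+x), and summing over the at most (n+1)^x tuples gives
   alpha_k <= n^-2. *)

From mathcomp Require Import all_boot all_order all_algebra.
From mathcomp Require Import reals.
From mathcomp.analysis Require Import sequences exp.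
From mathcomp Require Import zify.
Set Implicit Arguments. Unset Strict Implicit. Unset Printing Implicit Defensive.
Import Order.TTheory GRing.Theory Num.Theory.

Lemma leq_mul_bin m1 m2 k1 k2 : 'C(m1, k1) * 'C(m2, k2) <= 'C(m1 + m2, k1 + k2).
Proof.
rewrite -binomial.Vandermonde (bigD1 (Ordinal (leq_addr k2 k1 : k1 < (k1 + k2).+1))) //= addKn.
exact: leq_addr.
Qed.

Lemma leq_prod_bin (I : Type) (r : seq I) (m k : I -> nat) :
  \prod_(i <- r) 'C(m i, k i) <= 'C(\sum_(i <- r) m i, \sum_(i <- r) k i).
Proof.
elim: r => [|i r IHr]; first by rewrite !big_nil.
rewrite !big_cons; apply: leq_trans (leq_mul_bin _ _ _ _).
by rewrite leq_mul2l IHr orbT.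
Qed.

Lemma bin_leq_expn n m : 'C(n, m) <= n ^ m.
Proof.
elim: m => [|m IHm]; first by rewrite bin0.
rewrite -(leq_pmul2l (ltn0Sn m)) mul_bin_left expnS mulnCA.
by apply: leq_mul; [exact: leq_subr | exact: leq_trans IHm (leq_pmull _ _)].
Qed.

Lemma leq_bin_mul_expn m n d : m <= n -> 'C(m, d) * n ^ d <= 'C(n, d) * m ^ d.
Proof.
move=> le_mn; elim: d => [|d IHd]; first by rewrite !bin0.
rewrite -(leq_pmul2l (ltn0Sn d)) !expnS !mulnA !mul_bin_left.
have le_step : (m - d) * n <= (n - d) * m by nia.
by have := leq_mul le_step IHd; lia.
Qed.

Lemma leq_bin_subn a t k : t <= k <= a -> 'C(a - t, k - t) <= 'C(a, a - k).
Proof.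
case/andP=> le_tk le_ka.
rewrite -bin_sub ?leq_sub2r // subnBA // subnK ?(leq_trans le_tk) //.
exact/leq_bin2l/leq_subr.
Qed.

Lemma ltn_mul_expn c n x e : c < n -> x < e -> c * n ^ x < n ^ e.
Proof.
move=> lt_cn lt_xe; have n_gt0 : 0 < n := leq_ltn_trans (leq0n c) lt_cn.
by rewrite (leq_trans (_ : _ < n ^ x.+1)) ?leq_pexp2l // expnS ltn_pmul2r ?expn_gt0 ?n_gt0.
Qed.

Lemma succn_expn_le n x : 0 < n -> n.+1 ^ x <= 2 ^ x * n ^ x.
Proof. by move=> n_gt0; rewrite -expnMn; case: x => [|x] //; rewrite leq_exp2r //; lia. Qed.

Lemma succn_expn_mul_le c n x e : 2 ^ e * c < n -> x.+2 < e ->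
  n.+1 ^ x * c * n ^ 2 <= n ^ e.
Proof.
move=> lt_cn lt_xe; apply: leq_trans (ltnW (ltn_mul_expn lt_cn lt_xe)).
have n_gt0 : 0 < n := leq_ltn_trans (leq0n _) lt_cn.
rewrite -(addn2 x) expnD mulnA leq_pmul2r ?expn_gt0 ?n_gt0 // mulnAC.
apply: leq_mul => //; apply: leq_trans (succn_expn_le _ n_gt0) _.
by rewrite leq_pmul2r ?expn_gt0 ?n_gt0 // leq_pexp2l //; lia.
Qed.

Local Open Scope ring_scope.

Section BinomialWeight.
Variable R : realType.

Lemma succ_div_expr_le_expR1 m :
  (0 < m)%N -> (m.+1%:R / m%:R) ^+ m <= expR 1 :> R.
Proof.
move=> m_gt0; have m_neq0 : m%:R != 0 :> R by rewrite pnatr_eq0 -lt0n.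
have -> : expR 1 = expR (m%:R^-1) ^+ m :> R by rewrite -expRM_natl mulfV.
apply: lerXn2r; rewrite ?nnegrE ?divr_ge0 ?expR_ge0 //.
by rewrite -natr1 mulrDl divff // mul1r expR_ge1Dx.
Qed.

(* The bound on [a_coef] derived below, as a function of the gap [m = n - k]. *)
Definition bin_weight (n m : nat) : R := 'C(n, m)%:R * (m%:R / n%:R) ^+ (2 * m).

Lemma bin_weight_succ n m : (0 < m)%N -> expR 1 ^+ 2 * m.+1%:R <= n%:R :> R ->
  bin_weight n m.+1 <= bin_weight n m.
Proof.
move=> m_gt0 le_mn.
have n_gt0 : 0 < n%:R :> R.
  by apply: lt_le_trans le_mn; rewrite mulr_gt0 ?exprn_gt0 ?expR_gt0 ?ltr0n.
set x : R := m%:R / n%:R; set y : R := m.+1%:R / n%:R.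
have y_ratio : y = m.+1%:R / m%:R * x.
  by rewrite /x /y mulrA divfK // pnatr_eq0 -lt0n.
have bin_step : 'C(n, m.+1)%:R * y <= 'C(n, m)%:R.
  have : (m.+1 * 'C(n, m.+1))%:R = ((n - m) * 'C(n, m))%:R :> R by rewrite mul_bin_left.
  rewrite !natrM /y mulrA [_ * m.+1%:R]mulrC => ->.
  rewrite ler_pdivrMr // [X in X <= _]mulrC ler_wpM2l ?ler0n //.
  by rewrite ler_nat leq_subr.
have pow_step : y ^+ (2 * m) <= expR 1 ^+ 2 * x ^+ (2 * m).
  rewrite y_ratio exprMn mulnC !exprM ler_wpM2r ?exprn_ge0 ?divr_ge0 ?ler0n //.
  rewrite lerXn2r ?nnegrE ?expR_ge0 ?exprn_ge0 ?divr_ge0 ?ler0n //.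
  exact: succ_div_expr_le_expR1.
have ey_le1 : expR 1 ^+ 2 * y <= 1 by rewrite /y mulrA ler_pdivrMr // mul1r.
have y_ge0 : 0 <= y by rewrite divr_ge0 ?ler0n.
rewrite /bin_weight -/x -/y mulnS exprD expr2 -mulrA mulrA.
apply: le_trans (ler_pM _ _ bin_step (ler_wpM2l y_ge0 pow_step)) _;
  rewrite ?mulr_ge0 ?ler0n ?exprn_ge0 ?invr_ge0 //.
apply: ler_wpM2l; first exact: ler0n.
by rewrite mulrA [y * _]mulrC ler_piMl ?exprn_ge0 ?divr_ge0 ?ler0n.
Qed.

Lemma bin_weight_le n m0 m : (0 < m0 <= m)%N -> expR 1 ^+ 2 * m%:R <= n%:R :> R ->
  bin_weight n m <= bin_weight n m0.
Proof.
elim: m => [|m IHm]; first by case/andP=> /leq_trans/[apply].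
case/andP=> m0_gt0; rewrite leq_eqVlt => /orP[/eqP -> // | le_m0m le_mn].
have m_gt0 : (0 < m)%N := leq_trans m0_gt0 le_m0m.
apply: le_trans (bin_weight_succ m_gt0 le_mn) (IHm _ _); first by rewrite m0_gt0.
apply: le_trans le_mn; apply: ler_wpM2l; first by rewrite exprn_ge0 ?expR_ge0.
by rewrite ler_nat.
Qed.

Lemma bin_weight_le_expn n m : (0 < n)%N -> bin_weight n m <= (m ^ (2 * m))%:R / n%:R ^+ m.
Proof.
move=> n_gt0; have n_gt0' : 0 < n%:R :> R by rewrite ltr0n.
rewrite /bin_weight expr_div_n natrX mul2n -addnn [n%:R ^+ (_ + _)]exprD invfM mulrCA.
apply: ler_wpM2l; first by rewrite exprn_ge0 ?ler0n.
rewrite mulrA ler_piMl ?invr_ge0 ?exprn_ge0 ?ler0n //.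
by rewrite ler_pdivrMr ?exprn_gt0 // mul1r -natrX ler_nat bin_leq_expn.
Qed.

Lemma bin_ratio_le_expr m n d : (m <= n)%N -> (d <= n)%N ->
  'C(m, d)%:R / 'C(n, d)%:R <= (m%:R / n%:R) ^+ d :> R.
Proof.
move=> le_mn le_dn.
have bin_gt0' : 0 < 'C(n, d)%:R :> R by rewrite ltr0n bin_gt0.
have expn_gt0' : 0 < n%:R ^+ d :> R by rewrite -natrX ltr0n expn_gt0; lia.
rewrite ler_pdivrMr // expr_div_n mulrAC ler_pdivlMr // -!natrX -!natrM ler_nat.
by rewrite [X in (_ <= X)%N]mulnC leq_bin_mul_expn.
Qed.
End BinomialWeight.

Section RandomGraph.
Variables (R : realType) (n : nat) (d : 'I_n -> nat) (B : {set 'I_n}).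

Lemma deg_i_attained i : exists v, deg_i d i = d v.
Proof.
have : deg_i d i \in degs d by apply/mem_nth/ltn_ord.
by rewrite mem_undup => /mapP[v _ ->]; exists v.
Qed.

Lemma ndeg_leq lo hi : (forall v, lo <= d v <= hi)%N -> (ndeg d <= hi.+1 - lo)%N.
Proof.
move=> d_bounds; rewrite -(size_iota lo (hi.+1 - lo)).
apply: uniq_leq_size; first exact: undup_uniq.
move=> _ /[!mem_undup] /mapP[v _ ->]; rewrite mem_iota; have := d_bounds v; lia.
Qed.

Lemma sum_acount : (\sum_i acount d i)%N = n.
Proof.
rewrite /acount; under eq_bigr do rewrite -sum1dep_card.
rewrite (exchange_big_dep xpredT) //= -[n in _ = n]card_ord -sum1_card.
apply: eq_bigr => v _.
rewrite -(big_mkord (fun i => d v == nth 0%N (degs d) i) (fun=> 1%N)).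
rewrite -(big_nth 0%N (fun x => d v == x) (fun=> 1%N)) sum1_count.
rewrite (eq_count (a2 := pred1 (d v))) => [|x]; last exact: eq_sym.
by rewrite count_uniq_mem ?undup_uniq // mem_undup map_f ?mem_enum.
Qed.

Lemma prob_ge0_le1 (E : pred (outcome n)) : 0 <= prob R d E <= 1.
Proof.
rewrite /prob divr_ge0 ?ler0n //=.
have [->|total_gt0] := posnP #|[set N : outcome n | valid d N]|.
  by rewrite invr0 mulr0 ler01.
rewrite ler_pdivrMr ?ltr0n // mul1r ler_nat subset_leq_card //.
by apply/subsetP => N; rewrite !inE => /andP[].
Qed.

Lemma Rprob_ge0_le1 kk : 0 <= Rprob R d B kk <= 1.
Proof. by rewrite /Rprob; case: pickP => [S _|_]; rewrite ?prob_ge0_le1 ?lexx ?ler01. Qed.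

Lemma a_coef_le_bin_weight k (kk : 'I_(ndeg d) -> nat) :
  (forall v, 2 <= d v <= n)%N ->
  (forall i, tcount d B i <= kk i <= acount d i)%N -> (\sum_i kk i)%N = k ->
  a_coef R d B kk <= bin_weight R n (n - k).
Proof.
move=> d_bounds kk_bounds sum_kk; set m := (n - k)%N; set x : R := m%:R / n%:R.
have x_ge0 : 0 <= x by rewrite divr_ge0 ?ler0n.
have x_le1 : x <= 1.
  have [n_eq0|n_gt0] := posnP n; first by rewrite /x n_eq0 invr0 mulr0 ler01.
  by rewrite ler_pdivrMr ?ltr0n // mul1r ler_nat leq_subr.
have factor_le i : 'C(acount d i - tcount d B i, kk i - tcount d B i)%:R
      * ('C(m, deg_i d i)%:R / 'C(n, deg_i d i)%:R) ^+ (acount d i - kk i)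
    <= 'C(acount d i, acount d i - kk i)%:R * (x ^+ 2) ^+ (acount d i - kk i).
  have [v ->] := deg_i_attained i; have /andP[d_ge2 d_len] := d_bounds v.
  apply: ler_pM; rewrite ?ler0n ?exprn_ge0 ?divr_ge0 ?ler0n ?ler_nat ?leq_bin_subn //.
  apply: lerXn2r; rewrite ?nnegrE ?exprn_ge0 ?divr_ge0 ?ler0n //.
  apply: le_trans (bin_ratio_le_expr R (leq_subr _ _) d_len) _.
  exact: ler_wiXn2l.
have sum_gap : (\sum_i (acount d i - kk i))%N = m.
  rewrite sumnB ?sum_acount ?sum_kk // => i _.
  by have /andP[] := kk_bounds i.
rewrite /a_coef /= sum_kk -/m.
apply: le_trans (ler_piMr _ _) _.
- by apply: prodr_ge0 => i _; rewrite mulr_ge0 ?exprn_ge0 ?divr_ge0 ?ler0n.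
- by case/andP: (Rprob_ge0_le1 kk).
apply: (@le_trans _ _
  (\prod_i ('C(acount d i, acount d i - kk i)%:R * (x ^+ 2) ^+ (acount d i - kk i)))).
  by apply: ler_prod => i _; rewrite mulr_ge0 ?exprn_ge0 ?divr_ge0 ?ler0n ?factor_le.
rewrite big_split /= prodrXr sum_gap -natr_prod /bin_weight -/x exprM.
apply: ler_wpM2r; first by rewrite exprn_ge0 ?exprn_ge0.
rewrite ler_nat -[in X in (_ <= X)%N]sum_acount -[in X in (_ <= X)%N]sum_gap.
exact: leq_prod_bin.
Qed.

Lemma a_coef_le_expn D k :
  (forall v, 2 <= d v <= D)%N -> (D.+1 < n - k)%N ->
  expR 1 ^+ 2 * (n - k)%:R <= n%:R :> R ->
  forall kk : 'I_(ndeg d) -> nat,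
  (forall i, tcount d B i <= kk i <= acount d i)%N -> (\sum_i kk i)%N = k ->
  a_coef R d B kk <= (D.+2 ^ (2 * D.+2))%:R / n%:R ^+ D.+2.
Proof.
move=> d_bounds gap_gt gap_le kk kk_bounds sum_kk.
have d_le_n v : (2 <= d v <= n)%N by have := d_bounds v; lia.
apply: le_trans (a_coef_le_bin_weight d_le_n kk_bounds sum_kk) _.
apply: le_trans (bin_weight_le _ gap_le) (bin_weight_le_expn R _ _); lia.
Qed.

Lemma alpha_le_card_mul k (M : R) : 0 <= M ->
  (forall kk : 'I_(ndeg d) -> nat, (forall i, tcount d B i <= kk i <= acount d i)%N ->
     (\sum_i kk i)%N = k -> a_coef R d B kk <= M) ->
  alpha R d B k <= (n.+1 ^ ndeg d)%:R * M.
Proof.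
move=> M_ge0 a_coef_le; rewrite /alpha big_mkcond /=.
apply: (@le_trans _ _ (\sum_(kk : {ffun 'I_(ndeg d) -> 'I_n.+1}) M)).
  apply: ler_sum => kk _.
  by case: ifP => // /andP[/forallP kk_bounds /eqP]; apply: a_coef_le.
by rewrite sumr_const card_ffun !card_ord -[M *+ _]mulr_natl.
Qed.
End RandomGraph.

Theorem lemma16 (R : realType) (dmin dmax : nat) :
  (2 <= dmin)%N -> (dmin <= dmax)%N ->
  exists N : nat, forall n : nat, (N <= n)%N ->
  forall (d : 'I_n -> nat) (B : {set 'I_n}),
    (forall v, (dmin <= d v <= dmax)%N) ->
  forall k : nat, (#|B| <= k)%N -> (dmax.+1 < n - k)%N ->
    (n - k)%:R <= n%:R / (expR 1 ^+ 2) :> R ->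
    (forall kk : 'I_(ndeg d) -> nat,
       (forall i, (tcount d B i <= kk i <= acount d i)%N) ->
       (\sum_i kk i)%N = k ->
       a_coef R d B kk < (n%:R ^+ (2 + ndeg d))^-1)
    /\ alpha R d B k <= (n%:R ^+ 2)^-1.
Proof.
move=> dmin_ge2 dmin_le_dmax; set C := (dmax.+2 ^ (2 * dmax.+2))%N.
exists (2 ^ dmax.+2 * C).+1 => n n_large d B d_bounds k _ gap_gt gap_le.
have d_in v : (2 <= d v <= dmax)%N by have := d_bounds v; lia.
have ndeg_lt : ((ndeg d).+2 < dmax.+2)%N by have := ndeg_leq d_in; lia.
have C_lt_n : (C < n)%N by apply: leq_ltn_trans n_large; rewrite leq_pmull ?expn_gt0.
have nR_gt0 : 0 < n%:R :> R by rewrite ltr0n (leq_ltn_trans _ C_lt_n).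
have gap_le' : expR 1 ^+ 2 * (n - k)%:R <= n%:R :> R.
  by rewrite mulrC -ler_pdivlMr ?exprn_gt0 ?expR_gt0.
have a_coef_le := a_coef_le_expn (B := B) d_in gap_gt gap_le'.
split=> [kk kk_bounds sum_kk|].
  apply: le_lt_trans (a_coef_le kk kk_bounds sum_kk) _.
  rewrite ltr_pdivrMr ?exprn_gt0 // mulrC ltr_pdivlMr ?exprn_gt0 //.
  by rewrite -!natrX -natrM ltr_nat ltn_mul_expn.
apply: le_trans (alpha_le_card_mul _ a_coef_le) _; first by rewrite divr_ge0 ?exprn_ge0.
rewrite mulrA ler_pdivrMr ?exprn_gt0 // [_^-1 * _]mulrC ler_pdivlMr ?exprn_gt0 //.
by rewrite -!natrX -!natrM ler_nat succn_expn_mul_le.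
Qed.
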